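(* The cut rule is admissible in ${\sf GWF_{N_2}}$: for every $D\in{\sf Frm_2}$ and all finite multisets $\Gamma,\Gamma',\Delta,\Delta'$ of ${\sf Frm_2}$-formulas, if $\Gamma\Rightarrow D,\Delta$ and $D,\Gamma'\Rightarrow\Delta'$ are derivable in ${\sf GWF_{N_2}}$, then $\Gamma,\Gamma'\Rightarrow\Delta,\Delta'$ is derivable in ${\sf GWF_{N_2}}$.
   Context: Language: countably many atoms $p,q,\dots$, the constant $\bot$, and binary connectives $\wedge,\vee,\rightarrow$ ($\rightarrow$ is strict implication). ${\sf Frm}$ is the set of formulas built from atoms and $\bot$ with $\wedge,\vee,\rightarrow$; $A,B,C,D$ range over ${\sf Frm}$. Let $\supset$ be a new binary symbol (material implication) and ${\sf Frm_1}={\sf Frm}\cup\{A\supset B : A,B\in{\sf Frm}\}$ (no nesting of $\supset$). ${\sf Frm_2}$ is the smallest set containing ${\sf Frm_1}$ and closed under $\wedge$ and $\vee$; $X,Y$ range over ${\sf Frm_2}$. A sequent is $\Gamma\Rightarrow\Delta$ with $\Gamma,\Delta$ finite multisets of ${\sf Frm_2}$-formulas. The calculus ${\sf GWF_{N_2}}$ has initial sequents $(id)$ $p,\Gamma\Rightarrow\Delta,p$ ($p$ an atom) and $(L_\bot)$ $\bot,\Gamma\Rightarrow\Delta$, and rules (premises / conclusion): $(L_\wedge)$ $X,Y,\Gamma\Rightarrow\Delta$ / $X\wedge Y,\Gamma\Rightarrow\Delta$; $(R_\wedge)$ $\Gamma\Rightarrow\Delta,X$ and $\Gamma\Rightarrow\Delta,Y$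 / $\Gamma\Rightarrow\Delta,X\wedge Y$; $(L_\vee)$ $X,\Gamma\Rightarrow\Delta$ and $Y,\Gamma\Rightarrow\Delta$ / $X\vee Y,\Gamma\Rightarrow\Delta$; $(R_\vee)$ $\Gamma\Rightarrow\Delta,X,Y$ / $\Gamma\Rightarrow\Delta,X\vee Y$; $(L_\supset)$ $\Gamma\Rightarrow\Delta,A$ and $B,\Gamma\Rightarrow\Delta$ / $A\supset B,\Gamma\Rightarrow\Delta$; $(R_\supset)$ $A,\Gamma\Rightarrow\Delta,B$ / $\Gamma\Rightarrow\Delta,A\supset B$; $(LR_\rightarrow)$ $C\supset D,A\Rightarrow B$ / $\Gamma,C\rightarrow D\Rightarrow\Delta,A\rightarrow B$; $(R_\rightarrow)$ $A\Rightarrow B$ / $\Gamma\Rightarrow\Delta,A\rightarrow B$. Here $A,B,C,D\in{\sf Frm}$, $X,Y\in{\sf Frm_2}$, and $\Gamma,\Delta$ are arbitrary finite multisets of ${\sf Frm_2}$-formulas. *)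

From Stdlib Require Import List Permutation Bool.
Import ListNotations.

(* One syntax containing all connectives; Frm and Frm2 are carved out
   by the boolean predicates below. *)
Inductive form : Type :=
| Atom : nat -> form
| Bot  : form
| And  : form -> form -> form
| Or   : form -> form -> form
| Imp  : form -> form -> form   (* strict implication  -> *)
| Mat  : form -> form -> form.  (* material implication  ⊃ *)

Fixpoint isFrm (A : form) : bool :=
  match A with
  | Atom _ | Bot => true
  | And A B | Or A B | Imp A B => isFrm A && isFrm B
  | Mat _ _ => false
  end.

(* X \in Frm2 : smallest set containing Frm1 = Frm ∪ {A ⊃ B | A,B ∈ Frm},
   closed under And and Or. *)
Fixpoint isFrm2 (X : form) : bool :=
  match X with
  | Atom _ | Bot => true
  | And X Y | Or X Y => isFrm2 X && isFrm2 Y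
  | Imp A B | Mat A B => isFrm A && isFrm B
  end.

Definition wfctx (G : list form) : Prop := Forall (fun X => isFrm2 X = true) G.

(* Sequents G => D with G, D finite multisets, represented by lists up to
   permutation: every rule's conclusion may be any permutation of the
   displayed form. *)
Inductive GWF : list form -> list form -> Prop :=
| r_id : forall p G D G' D', wfctx G -> wfctx D ->
    Permutation G' (Atom p :: G) -> Permutation D' (Atom p :: D) ->
    GWF G' D'
| r_Lbot : forall G D G', wfctx G -> wfctx D ->
    Permutation G' (Bot :: G) -> GWF G' D
| r_Land : forall X Y G D G',
    GWF (X :: Y :: G) D -> Permutation G' (And X Y :: G) -> GWF G' D
| r_Rand : forall X Y G D D',
    GWF G (X :: D) -> GWF G (Y :: D) ->
    Permutation D' (And X Y :: D) -> GWF G D'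
| r_Lor : forall X Y G D G',
    GWF (X :: G) D -> GWF (Y :: G) D ->
    Permutation G' (Or X Y :: G) -> GWF G' D
| r_Ror : forall X Y G D D',
    GWF G (X :: Y :: D) -> Permutation D' (Or X Y :: D) -> GWF G D'
| r_Lmat : forall A B G D G', isFrm A = true -> isFrm B = true ->
    GWF G (A :: D) -> GWF (B :: G) D ->
    Permutation G' (Mat A B :: G) -> GWF G' D
| r_Rmat : forall A B G D D', isFrm A = true -> isFrm B = true ->
    GWF (A :: G) (B :: D) ->
    Permutation D' (Mat A B :: D) -> GWF G D'
| r_LRimp : forall A B C D G Dl G' D',
    isFrm A = true -> isFrm B = true -> isFrm C = true -> isFrm D = true ->
    wfctx G -> wfctx Dl ->
    GWF [Mat C D; A] [B] ->
    Permutation G' (Imp C D :: G) -> Permutation D' (Imp A B :: Dl) ->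
    GWF G' D'
| r_Rimp : forall A B G D D',
    isFrm A = true -> isFrm B = true -> wfctx G -> wfctx D ->
    GWF [A] [B] ->
    Permutation D' (Imp A B :: D) -> GWF G D'.

From Stdlib Require Import List Permutation Bool Lia.
Import ListNotations.

(* Cut is proved in its context-sharing form ([G => F, D] and [F, G => D]
   give [G => D]) by structural induction on [F]; the multiplicative form
   follows by weakening.  Conjunction, disjunction and material implication
   have invertible rules on both sides, so a cut on them splits into cuts on
   the immediate subformulas.  For an atom or a strict implication [F],
   follow the derivation of [G => F, D] upwards, inverting the other premise
   along the way, to the rules where [F] is principal.  These provide either
   [F] itself in [G] (an atom), or the premise [A => B] of (R->), or the
   premise [C ⊃ E, A => B] of (LR->) together with [C -> E] in [G].  That
   makes the antecedent copy of [F] redundant: going up the other derivation,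
   [F] is only ever used by (id) or as the principal formula of (LR->), and
   the latter is simulated by a cut on [A ⊃ B] -- not a subformula of
   [A -> B], but its cut reduces to cuts on [A] and [B]. *)

Definition form_eq_dec (A B : form) : {A = B} + {A <> B}.
Proof. decide equality; apply PeanoNat.Nat.eq_dec. Defined.

Lemma count_occ_cons_if (a x : form) l :
  count_occ form_eq_dec (a :: l) x =
  (if form_eq_dec a x then 1 else 0) + count_occ form_eq_dec l x.
Proof. simpl; now destruct form_eq_dec. Qed.

(* Multisets are compared by counting occurrences, using the permutation
   hypotheses in context; each [if] is an opaque atom for [lia]. *)
Ltac solve_perm :=
  let x := fresh "x" in
  apply (Permutation_count_occ form_eq_dec); intro x;
  repeat match goal with Hp : Permutation ?l ?m |- _ =>
    pose proof (proj1 (Permutation_count_occ form_eq_dec l m) Hp x); clear Hp end;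
  repeat (rewrite count_occ_app in * || rewrite count_occ_cons_if in * );
  simpl count_occ in *; lia.

Lemma isFrm_isFrm2 A : isFrm A = true -> isFrm2 A = true.
Proof.
  induction A; simpl; try discriminate; trivial;
    intros [? ?]%andb_prop; apply andb_true_intro; auto.
Qed.

Lemma wfctx_perm {l m} : Permutation l m -> wfctx l -> wfctx m.
Proof. apply Permutation_Forall. Qed.

Ltac solve_wf := solve [
  repeat match goal with
  | Hp : Permutation ?l ?m, W : wfctx ?l |- _ =>
      pose proof (wfctx_perm Hp W); clear Hp
  | Hp : Permutation ?m ?l, W : wfctx ?l |- _ =>
      pose proof (wfctx_perm (Permutation_sym Hp) W); clear Hp
  | Hp : Permutation ?l ?m |- wfctx ?l =>
      apply (wfctx_perm (Permutation_sym Hp)); clear Hp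
  end;
  unfold wfctx in *;
  repeat match goal with
  | H : Forall _ (_ :: _) |- _ => apply Forall_cons_iff in H as [? ?]
  | H : Forall _ (_ ++ _) |- _ => apply Forall_app in H as [? ?]
  | H : _ /\ _ |- _ => destruct H
  | H : (_ && _) = true |- _ => apply andb_prop in H as [? ?]
  | H : isFrm2 (_ _ _) = true |- _ => simpl in H
  | |- Forall _ (_ ++ _) => apply Forall_app; split
  | |- Forall _ (_ :: _) => constructor
  | |- Forall _ [] => constructor
  | |- isFrm2 (_ _ _) = true => simpl; apply andb_true_intro; split
  end;
  auto using isFrm_isFrm2 ].

Ltac discharge := first [assumption | solve_perm | solve_wf].

Lemma Permutation_cons_cases {A} {a b : A} {l m} :
  Permutation (a :: l) (b :: m) ->
  (a = b /\ Permutation l m) \/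
  exists k, Permutation l (b :: k) /\ Permutation m (a :: k).
Proof.
  intro H.
  destruct (Permutation_in a H (in_eq a l)) as [<- | Hin].
  - left; split; [reflexivity | exact (Permutation_cons_inv H)].
  - right; apply in_split in Hin as (m1 & m2 & ->); exists (m1 ++ m2); split.
    + apply (Permutation_cons_inv (a := a)); rewrite H.
      symmetry; apply perm_trans with (b :: a :: m1 ++ m2);
        [apply perm_swap | apply perm_skip, Permutation_middle].
    + symmetry; apply Permutation_middle.
Qed.

(* Split on whether the formula [F] singled out by [HP] is the principal
   formula of the last rule (displayed by [Hr]). *)
Ltac principal_cases HP Hr :=
  destruct (Permutation_cons_cases
              (Permutation_trans (Permutation_sym HP) Hr))
    as [[-> Hrest] | (k & Hk & Hk')].

Lemma GWF_wfctx {G D} : GWF G D -> wfctx G /\ wfctx D.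
Proof. induction 1; split; solve_wf. Qed.

Lemma GWF_perm {G D G' D'} :
  GWF G D -> Permutation G G' -> Permutation D D' -> GWF G' D'.
Proof.
  intros Hd; revert G' D'.
  induction Hd; intros G2 D2 HG HD.
  - apply (r_id p G D); discharge.
  - apply (r_Lbot G D2); discharge.
  - apply (r_Land X Y G); [apply IHHd | ..]; discharge.
  - apply (r_Rand X Y G2 D); [apply IHHd1 | apply IHHd2 | ..]; discharge.
  - apply (r_Lor X Y G D2); [apply IHHd1 | apply IHHd2 | ..]; discharge.
  - apply (r_Ror X Y G2 D); [apply IHHd | ..]; discharge.
  - apply (r_Lmat A B G D2); [.. | apply IHHd1 | apply IHHd2 |]; discharge.
  - apply (r_Rmat A B G2 D); [.. | apply IHHd |]; discharge.
  - apply (r_LRimp A B C D G Dl); discharge.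
  - apply (r_Rimp A B G2 D); discharge.
Qed.

Lemma GWF_weaken L R {G D} :
  wfctx L -> wfctx R -> GWF G D -> GWF (L ++ G) (R ++ D).
Proof.
  intros WL WR Hd; induction Hd.
  - apply (r_id p (L ++ G) (R ++ D)); discharge.
  - apply (r_Lbot (L ++ G) (R ++ D)); discharge.
  - apply (r_Land X Y (L ++ G)); [apply (GWF_perm IHHd) | ..]; discharge.
  - apply (r_Rand X Y _ (R ++ D));
      [apply (GWF_perm IHHd1) | apply (GWF_perm IHHd2) | ..]; discharge.
  - apply (r_Lor X Y (L ++ G));
      [apply (GWF_perm IHHd1) | apply (GWF_perm IHHd2) | ..]; discharge.
  - apply (r_Ror X Y _ (R ++ D)); [apply (GWF_perm IHHd) | ..]; discharge.
  - apply (r_Lmat A B (L ++ G));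
      [.. | apply (GWF_perm IHHd1) | apply (GWF_perm IHHd2) |]; discharge.
  - apply (r_Rmat A B _ (R ++ D)); [.. | apply (GWF_perm IHHd) |]; discharge.
  - apply (r_LRimp A B C D (L ++ G) (R ++ Dl)); discharge.
  - apply (r_Rimp A B _ (R ++ D)); discharge.
Qed.

(* [(L, R)] lists the premises [L ++ G => R ++ D] of the invertible rule for
   [F] on each side. *)
Definition left_premises (F : form) : list (list form * list form) :=
  match F with
  | And X Y => [([X; Y], [])]
  | Or X Y => [([X], []); ([Y], [])]
  | Mat A B => [([], [A]); ([B], [])]
  | _ => []
  end.

Definition right_premises (F : form) : list (list form * list form) :=
  match F with
  | And X Y => [([], [X]); ([], [Y])]
  | Or X Y => [([], [X; Y])]
  | Mat A B => [([A], [B])]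
  | _ => []
  end.

Ltac premise_cases Hin :=
  simpl in Hin;
  repeat match type of Hin with _ \/ _ => destruct Hin as [Hin | Hin] end;
  try contradiction; injection Hin as <- <-.

Lemma left_premises_wfctx {F L R} :
  isFrm2 F = true -> In (L, R) (left_premises F) -> wfctx L /\ wfctx R.
Proof. intros HF Hin; destruct F; premise_cases Hin; split; solve_wf. Qed.

Lemma right_premises_wfctx {F L R} :
  isFrm2 F = true -> In (L, R) (right_premises F) -> wfctx L /\ wfctx R.
Proof. intros HF Hin; destruct F; premise_cases Hin; split; solve_wf. Qed.

Ltac close_principal Hin :=
  premise_cases Hin;
  match goal with Hd : GWF _ _ |- _ => apply (GWF_perm Hd); solve_perm end.

Lemma GWF_inv_left {F L R G Gr D} :
  GWF Gr D -> Permutation Gr (F :: G) -> In (L, R) (left_premises F) ->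
  GWF (L ++ G) (R ++ D).
Proof.
  intros Hd HP Hin.
  assert (WF : isFrm2 F = true) by (destruct (GWF_wfctx Hd); solve_wf).
  destruct (left_premises_wfctx WF Hin) as [WL WR]; clear WF.
  revert G HP; induction Hd; intros G0 HP.
  - principal_cases HP H1; [close_principal Hin |].
    apply (r_id p (L ++ k) (R ++ D)); discharge.
  - principal_cases HP H1; [close_principal Hin |].
    apply (r_Lbot (L ++ k) (R ++ D)); discharge.
  - principal_cases HP H; [close_principal Hin |].
    assert (I := IHHd (X :: Y :: k) ltac:(solve_perm)).
    apply (r_Land X Y (L ++ k)); [apply (GWF_perm I) | ..]; discharge.
  - assert (I1 := IHHd1 G0 HP); assert (I2 := IHHd2 G0 HP).
    apply (r_Rand X Y _ (R ++ D));
      [apply (GWF_perm I1) | apply (GWF_perm I2) | ..]; discharge.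
  - principal_cases HP H; [close_principal Hin |].
    assert (I1 := IHHd1 (X :: k) ltac:(solve_perm)).
    assert (I2 := IHHd2 (Y :: k) ltac:(solve_perm)).
    apply (r_Lor X Y (L ++ k));
      [apply (GWF_perm I1) | apply (GWF_perm I2) | ..]; discharge.
  - assert (I := IHHd G0 HP).
    apply (r_Ror X Y _ (R ++ D)); [apply (GWF_perm I) | ..]; discharge.
  - principal_cases HP H1; [close_principal Hin |].
    assert (I1 := IHHd1 k ltac:(solve_perm)).
    assert (I2 := IHHd2 (B :: k) ltac:(solve_perm)).
    apply (r_Lmat A B (L ++ k));
      [.. | apply (GWF_perm I1) | apply (GWF_perm I2) |]; discharge.
  - assert (I := IHHd (A :: G0) ltac:(solve_perm)).
    apply (r_Rmat A B _ (R ++ D)); [.. | apply (GWF_perm I) |]; discharge.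
  - principal_cases HP H5; [close_principal Hin |].
    apply (r_LRimp A B C D (L ++ k) (R ++ Dl)); discharge.
  - apply (r_Rimp A B _ (R ++ D)); discharge.
Qed.

Lemma GWF_inv_right {F L R G D Dr} :
  GWF G Dr -> Permutation Dr (F :: D) -> In (L, R) (right_premises F) ->
  GWF (L ++ G) (R ++ D).
Proof.
  intros Hd HP Hin.
  assert (WF : isFrm2 F = true) by (destruct (GWF_wfctx Hd); solve_wf).
  destruct (right_premises_wfctx WF Hin) as [WL WR]; clear WF.
  revert D HP; induction Hd; intros D0 HP.
  - principal_cases HP H2; [close_principal Hin |].
    apply (r_id p (L ++ G) (R ++ k)); discharge.
  - apply (r_Lbot (L ++ G) (R ++ D0)); discharge.
  - assert (I := IHHd D0 HP).
    apply (r_Land X Y (L ++ G)); [apply (GWF_perm I) | ..]; discharge.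
  - principal_cases HP H; [close_principal Hin |].
    assert (I1 := IHHd1 (X :: k) ltac:(solve_perm)).
    assert (I2 := IHHd2 (Y :: k) ltac:(solve_perm)).
    apply (r_Rand X Y _ (R ++ k));
      [apply (GWF_perm I1) | apply (GWF_perm I2) | ..]; discharge.
  - assert (I1 := IHHd1 D0 HP); assert (I2 := IHHd2 D0 HP).
    apply (r_Lor X Y (L ++ G));
      [apply (GWF_perm I1) | apply (GWF_perm I2) | ..]; discharge.
  - principal_cases HP H; [close_principal Hin |].
    assert (I := IHHd (X :: Y :: k) ltac:(solve_perm)).
    apply (r_Ror X Y _ (R ++ k)); [apply (GWF_perm I) | ..]; discharge.
  - assert (I1 := IHHd1 (A :: D0) ltac:(solve_perm)); assert (I2 := IHHd2 D0 HP).
    apply (r_Lmat A B (L ++ G));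
      [.. | apply (GWF_perm I1) | apply (GWF_perm I2) |]; discharge.
  - principal_cases HP H1; [close_principal Hin |].
    assert (I := IHHd (B :: k) ltac:(solve_perm)).
    apply (r_Rmat A B _ (R ++ k)); [.. | apply (GWF_perm I) |]; discharge.
  - principal_cases HP H6; [close_principal Hin |].
    apply (r_LRimp A B C D (L ++ G) (R ++ k)); discharge.
  - principal_cases HP H3; [close_principal Hin |].
    apply (r_Rimp A B _ (R ++ k)); discharge.
Qed.

Definition cut_admissible (F : form) : Prop :=
  forall G D, GWF G (F :: D) -> GWF (F :: G) D -> GWF G D.

Lemma cut_and X Y :
  cut_admissible X -> cut_admissible Y -> cut_admissible (And X Y).
Proof.
  intros cutX cutY G D Hl Hr.
  assert (HX : GWF G (X :: D))
    by exact (GWF_inv_right Hl (Permutation_refl _) (or_introl eq_refl)).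
  assert (HY : GWF G (Y :: D))
    by exact (GWF_inv_right Hl (Permutation_refl _) (or_intror (or_introl eq_refl))).
  assert (HXY : GWF (X :: Y :: G) D)
    by exact (GWF_inv_left Hr (Permutation_refl _) (or_introl eq_refl)).
  pose proof (GWF_wfctx Hl).
  apply (cutX G D HX), (cutY (X :: G) D).
  - apply (GWF_weaken [X] []); discharge.
  - apply (GWF_perm HXY); solve_perm.
Qed.

Lemma cut_or X Y :
  cut_admissible X -> cut_admissible Y -> cut_admissible (Or X Y).
Proof.
  intros cutX cutY G D Hl Hr.
  assert (HXY : GWF G (X :: Y :: D))
    by exact (GWF_inv_right Hl (Permutation_refl _) (or_introl eq_refl)).
  assert (HX : GWF (X :: G) D)
    by exact (GWF_inv_left Hr (Permutation_refl _) (or_introl eq_refl)).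
  assert (HY : GWF (Y :: G) D)
    by exact (GWF_inv_left Hr (Permutation_refl _) (or_intror (or_introl eq_refl))).
  pose proof (GWF_wfctx Hl).
  apply (cutY G D); [apply (cutX G (Y :: D) HXY) | exact HY].
  apply (GWF_weaken [] [Y]); discharge.
Qed.

Lemma cut_mat A B :
  cut_admissible A -> cut_admissible B -> cut_admissible (Mat A B).
Proof.
  intros cutA cutB G D Hl Hr.
  assert (HAB : GWF (A :: G) (B :: D))
    by exact (GWF_inv_right Hl (Permutation_refl _) (or_introl eq_refl)).
  assert (HA : GWF G (A :: D))
    by exact (GWF_inv_left Hr (Permutation_refl _) (or_introl eq_refl)).
  assert (HB : GWF (B :: G) D)
    by exact (GWF_inv_left Hr (Permutation_refl _) (or_intror (or_introl eq_refl))).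
  pose proof (GWF_wfctx Hl).
  apply (cutB G D); [apply (cutA G (B :: D)) | exact HB]; [| exact HAB].
  apply (GWF_perm (GWF_weaken [] [B] ltac:(discharge) ltac:(discharge) HA));
    solve_perm.
Qed.

(* The antecedent formulas [principal_right] looks at; left rules never
   decompose them. *)
Definition left_passive (X : form) : bool :=
  match X with Atom _ | Imp _ _ => true | _ => false end.

(* What a derivation of [G => F, D] whose last rule has principal formula [F]
   yields, for the formulas with a non-invertible right rule: the axiom
   (id) for an atom, the premise of (R->) or of (LR->) for [Imp A B]. *)
Definition principal_right (F : form) (G : list form) : Prop :=
  match F with
  | Atom p => In (Atom p) G
  | Imp A B => GWF [A] [B] \/ exists C E, In (Imp C E) G /\ GWF [Mat C E; A] [B]
  | _ => False
  end.

Lemma principal_right_mono F G G' :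
  (forall X, left_passive X = true -> In X G -> In X G') ->
  principal_right F G -> principal_right F G'.
Proof.
  intros Hinc; destruct F; simpl; auto.
  intros [HAB | (C & E & Hin & HCE)]; [left | right; exists C, E]; auto.
Qed.

Lemma principal_right_app F L G :
  principal_right F G -> principal_right F (L ++ G).
Proof. apply principal_right_mono; intros X _ Hin; apply in_or_app; auto. Qed.

Lemma principal_right_drop_active F P G k :
  Permutation G (P :: k) -> left_passive P = false ->
  principal_right F G -> principal_right F k.
Proof.
  intros HP HPa; apply principal_right_mono; intros X HXa Hin.
  destruct (Permutation_in X HP Hin) as [-> | Hk]; [congruence | exact Hk].
Qed.

Lemma GWF_id_in p G D :
  In (Atom p) G -> wfctx G -> wfctx D -> GWF G (Atom p :: D).
Proof.
  intros Hin WG WD; apply in_split in Hin as (l1 & l2 & ->).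
  apply (r_id p (l1 ++ l2) D); discharge.
Qed.

(* The (LR->) rule with principal formula [Imp C E] can be replaced by a
   cut on [Mat C E] against what introduced [Imp C E] on the right. *)
Lemma LRimp_by_principal_right C E A B G D :
  cut_admissible (Mat C E) -> principal_right (Imp C E) G ->
  isFrm A = true -> isFrm B = true -> isFrm C = true -> isFrm E = true ->
  wfctx G -> wfctx D -> GWF [Mat C E; A] [B] -> GWF G (Imp A B :: D).
Proof.
  intros cutCE [HCE | (C' & E' & Hin & HCE)] HA HB HC HE WG WD Hd.
  - apply (r_Rimp A B G D); try discharge.
    apply (cutCE [A] [B]); [| exact Hd].
    apply (r_Rmat C E [A] [B]); try discharge.
    apply (GWF_perm (GWF_weaken [A] [B] ltac:(discharge) ltac:(discharge) HCE)); solve_perm.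
  - apply in_split in Hin as (l1 & l2 & ->).
    assert (HC' : isFrm C' = true) by solve_wf.
    assert (HE' : isFrm E' = true) by solve_wf.
    apply (r_LRimp A B C' E' (l1 ++ l2) D); try discharge.
    apply (cutCE [Mat C' E'; A] [B]).
    + apply (r_Rmat C E _ [B]); try discharge.
      apply (GWF_perm (GWF_weaken [A] [B] ltac:(discharge) ltac:(discharge) HCE));
        solve_perm.
    + apply (GWF_perm (GWF_weaken [Mat C' E'] [] ltac:(discharge) ltac:(discharge) Hd));
        solve_perm.
Qed.

Section EliminateLeft.

Variable F : form.
Hypothesis F_passive : left_passive F = true.
Hypothesis cut_mat_of_imp : forall C E, F = Imp C E -> cut_admissible (Mat C E).

(* Going up a derivation, an antecedent [F] is only used by (id) or as the
   principal formula of (LR->), and [principal_right F G] replaces both. *)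
Lemma GWF_elim_left G D : principal_right F G -> GWF (F :: G) D -> GWF G D.
Proof.
  intros Hpr Hd.
  enough (Hgen : forall Gr D, GWF Gr D -> forall G, Permutation Gr (F :: G) ->
                 principal_right F G -> GWF G D)
    by exact (Hgen _ _ Hd G (Permutation_refl _) Hpr).
  clear G D Hpr Hd; intros Gr D Hd; induction Hd; intros G0 HP Hpr.
  - principal_cases HP H1.
    + apply (GWF_perm (GWF_id_in p G0 D Hpr ltac:(discharge) H0)); solve_perm.
    + apply (r_id p k D); discharge.
  - principal_cases HP H1; [discriminate |].
    apply (r_Lbot k D); discharge.
  - principal_cases HP H; [discriminate |].
    pose proof (principal_right_drop_active _ _ _ _ Hk eq_refl Hpr) as Hprk.
    apply (r_Land X Y k); [apply (IHHd ([X; Y] ++ k)) | ..];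
      [solve_perm | apply principal_right_app, Hprk | discharge].
  - apply (r_Rand X Y G0 D); [apply IHHd1 | apply IHHd2 | ..]; discharge.
  - principal_cases HP H; [discriminate |].
    pose proof (principal_right_drop_active _ _ _ _ Hk eq_refl Hpr) as Hprk.
    apply (r_Lor X Y k); [apply (IHHd1 ([X] ++ k)) | apply (IHHd2 ([Y] ++ k)) | ..];
      solve [discharge | apply principal_right_app, Hprk].
  - apply (r_Ror X Y G0 D); [apply IHHd | ..]; discharge.
  - principal_cases HP H1; [discriminate |].
    pose proof (principal_right_drop_active _ _ _ _ Hk eq_refl Hpr) as Hprk.
    apply (r_Lmat A B k); [.. | apply IHHd1 | apply (IHHd2 ([B] ++ k)) |];
      solve [discharge | apply principal_right_app, Hprk].
  - apply (r_Rmat A B G0 D); [.. | apply (IHHd ([A] ++ G0)) |];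
      solve [discharge | apply principal_right_app, Hpr].
  - principal_cases HP H5.
    + apply (GWF_perm (LRimp_by_principal_right C D A B G0 Dl
                         (cut_mat_of_imp C D eq_refl) Hpr H H0 H1 H2
                         ltac:(discharge) H4 Hd)); solve_perm.
    + apply (r_LRimp A B C D k Dl); discharge.
  - apply (r_Rimp A B G0 D); discharge.
Qed.

End EliminateLeft.

Section CutNoninvertible.

Variable F : form.
Hypothesis F_noninvertible : right_premises F = [].
Hypothesis elim_left_F :
  forall G D, principal_right F G -> GWF (F :: G) D -> GWF G D.

(* Induction on the derivation of [G => F, D], inverting the other premise
   along each invertible rule until [F] becomes principal. *)
Lemma cut_noninvertible : cut_admissible F.
Proof.
  intros G D Hl.
  enough (Hgen : forall G Dr, GWF G Dr -> forall D, Permutation Dr (F :: D) ->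
                 GWF (F :: G) D -> GWF G D)
    by exact (Hgen G _ Hl D (Permutation_refl _)).
  clear G D Hl; intros G0 Dr Hd; induction Hd; intros D0 HP Hr.
  - principal_cases HP H2.
    + apply elim_left_F; [| exact Hr].
      apply (Permutation_in _ (Permutation_sym H1)), in_eq.
    + apply (r_id p G k); discharge.
  - pose proof (GWF_wfctx Hr).
    apply (r_Lbot G D0); discharge.
  - assert (HrXY : GWF ([X; Y] ++ F :: G) ([] ++ D0))
      by (apply (GWF_inv_left (F := And X Y) Hr); [solve_perm | now left]).
    apply (r_Land X Y G); [apply (IHHd D0 HP), (GWF_perm HrXY) | ..]; discharge.
  - principal_cases HP H; [discriminate |].
    assert (HrX : GWF ([] ++ F :: G) ([X] ++ k))
      by (apply (GWF_inv_right (F := And X Y) Hr); [solve_perm | now left]).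
    assert (HrY : GWF ([] ++ F :: G) ([Y] ++ k))
      by (apply (GWF_inv_right (F := And X Y) Hr); [solve_perm | now right; left]).
    apply (r_Rand X Y G k); [apply (IHHd1 (X :: k)) | apply (IHHd2 (Y :: k)) | ..];
      discharge.
  - assert (HrX : GWF ([X] ++ F :: G) ([] ++ D0))
      by (apply (GWF_inv_left (F := Or X Y) Hr); [solve_perm | now left]).
    assert (HrY : GWF ([Y] ++ F :: G) ([] ++ D0))
      by (apply (GWF_inv_left (F := Or X Y) Hr); [solve_perm | now right; left]).
    apply (r_Lor X Y G D0);
      [apply (IHHd1 D0 HP), (GWF_perm HrX) | apply (IHHd2 D0 HP), (GWF_perm HrY) | ..];
      discharge.
  - principal_cases HP H; [discriminate |].
    assert (HrXY : GWF ([] ++ F :: G) ([X; Y] ++ k))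
      by (apply (GWF_inv_right (F := Or X Y) Hr); [solve_perm | now left]).
    apply (r_Ror X Y G k); [apply (IHHd (X :: Y :: k)) | ..]; discharge.
  - assert (HrA : GWF ([] ++ F :: G) ([A] ++ D0))
      by (apply (GWF_inv_left (F := Mat A B) Hr); [solve_perm | now left]).
    assert (HrB : GWF ([B] ++ F :: G) ([] ++ D0))
      by (apply (GWF_inv_left (F := Mat A B) Hr); [solve_perm | now right; left]).
    apply (r_Lmat A B G D0);
      [.. | apply (IHHd1 (A :: D0)) | apply (IHHd2 D0 HP), (GWF_perm HrB) |];
      discharge.
  - principal_cases HP H1; [discriminate |].
    assert (HrAB : GWF ([A] ++ F :: G) ([B] ++ k))
      by (apply (GWF_inv_right (F := Mat A B) Hr); [solve_perm | now left]).
    apply (r_Rmat A B G k); [.. | apply (IHHd (B :: k)), (GWF_perm HrAB) |];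
      discharge.
  - principal_cases HP H6.
    + apply elim_left_F; [| exact Hr].
      right; exists C, D; split; [| exact Hd].
      apply (Permutation_in _ (Permutation_sym H5)), in_eq.
    + apply (r_LRimp A B C D G k); discharge.
  - principal_cases HP H3.
    + apply elim_left_F; [left; exact Hd | exact Hr].
    + apply (r_Rimp A B G k); discharge.
Qed.

End CutNoninvertible.

Lemma cut_admissible_all F : cut_admissible F.
Proof.
  induction F as [p | | X IHX Y IHY | X IHX Y IHY | A IHA B IHB | A IHA B IHB].
  - apply cut_noninvertible; [reflexivity |].
    apply GWF_elim_left; [reflexivity | discriminate].
  - apply cut_noninvertible; [reflexivity | contradiction].
  - now apply cut_and.
  - now apply cut_or.
  - apply cut_noninvertible; [reflexivity |].
    apply GWF_elim_left; [reflexivity |].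
    intros C E [= <- <-]; now apply cut_mat.
  - now apply cut_mat.
Qed.

Theorem theorem3p6 :
  forall (Dc : form) (G G' D D' : list form),
    isFrm2 Dc = true -> wfctx G -> wfctx G' -> wfctx D -> wfctx D' ->
    GWF G (Dc :: D) -> GWF (Dc :: G') D' ->
    GWF (G ++ G') (D ++ D').
Proof.
  intros Dc G G' D D' _ WG WG' WD WD' Hl Hr.
  apply (cut_admissible_all Dc).
  - apply (GWF_perm (GWF_weaken G' D' WG' WD' Hl)); solve_perm.
  - apply (GWF_perm (GWF_weaken G D WG WD Hr)); solve_perm.
Qed.
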